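(* Let $(\mathcal{X},d)$ be a metric space, $\mathbb{P}\colon \mathcal{X}\to[0,+\infty)$ a function (a probability density), $\mathcal{S}_\mathbf{x}=\{\mathbf{x}_1,\dots,\mathbf{x}_n\}\subset\mathcal{X}$ a finite point cloud, $\delta\ge 0$, and $\sigma\colon\mathcal{X}\times\mathcal{X}\to(0,+\infty)$ a threshold function. Assume that the Rips graph $R_\delta(\mathcal{S}_\mathbf{x})$ and the $\sigma$-Rips graph $R_{\sigma(\cdot)}(\mathcal{S}_\mathbf{x})$ have the same connected components (as partitions of $\mathcal{S}_\mathbf{x}$). Then \[ d_B^{\infty}\Big(D\mathbf{R}_{\delta}(\mathcal{S}_\mathbf{x},\mathbb{P}),\,D\mathbf{R}_{\sigma(\cdot)}(\mathcal{S}_\mathbf{x},\mathbb{P})\Big)\;\le\;\max_{(\mathbf{x}_i,\mathbf{x}_j)\in\mathcal{S}_\mathbf{x}^2}\big|\alpha_\delta(\mathbf{x}_i,\mathbf{x}_j)-\alpha_{\sigma(\cdot)}(\mathbf{x}_i,\mathbf{x}_j)\big|, \] where $\alpha_\delta(\mathbf{x}_i,\mathbf{x}_j)=\alpha_{\sigma(\cdot)}(\mathbf{x}_i,\mathbf{x}_j)=0$ by convention whenever $\mathbf{x}_i$ and $\mathbf{x}_j$ are not in the same connected component.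
   Context: Rips graph: $R_\delta(\mathcal{S}_\mathbf{x})$ is the graph with vertex set $\mathcal{S}_\mathbf{x}$ and an edge between $\mathbf{x}_i\neq\mathbf{x}_j$ iff $d(\mathbf{x}_i,\mathbf{x}_j)\le\delta$. $\sigma$-Rips graph: $R_{\sigma(\cdot)}(\mathcal{S}_\mathbf{x})$ is the graph with vertex set $\mathcal{S}_\mathbf{x}$ and an edge between $\mathbf{x}_i\neq\mathbf{x}_j$ iff $d(\mathbf{x}_i,\mathbf{x}_j)\le\sigma(\mathbf{x}_i,\mathbf{x}_j)$. For a subset $A\subseteq\mathcal{S}_\mathbf{x}$, $R_\delta(A)$ (resp. $R_{\sigma(\cdot)}(A)$) denotes the same construction on vertex set $A$ (i.e. the induced subgraph). Upper-star filtration and persistence module: for $\alpha\in\overline{\mathbb{R}}=\mathbb{R}\cup\{\pm\infty\}$ let $R_{\delta,\alpha}=R_\delta(\mathcal{S}_\mathbf{x}\cap\mathbb{P}^{-1}([\alpha,+\infty]))$. For $\alpha\le\beta$ there is an inclusion $R_{\delta,\beta}\subseteq R_{\delta,\alpha}$, inducing a linear map $H_0(R_{\delta,\beta})\to H_0(R_{\delta,\alpha})$, where $H_0(G)$ is the vector space (over a fixed field) with basis the connected components of the graph $G$. The family $\mathbf{R}_\delta(\mathcal{S}_\mathbf{x},\mathbb{P})=(H_0(R_{\delta,\alpha}))_{\alpha\in\overline{\mathbb{R}}}$ with these maps is a persistence module (time flows from $+\infty$ to $-\infty$); $\mathbf{R}_{\sigma(\cdot)}(\mathcal{S}_\mathbf{x},\mathbb{P})$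 is defined identically with $R_{\sigma(\cdot)}$ in place of $R_\delta$. Persistence diagram: $D\mathbf{X}$ of such a module is the multiset in $\overline{\mathbb{R}}^2$ consisting of the diagonal $\{(x,x):x\in\overline{\mathbb{R}}\}$ (each point with infinite multiplicity) together with one point $(b,e)$, $e<b$, for each interval-basis element (connected component class) born at level $b$ and dying (merging into an older component, per the elder rule) at level $e$; a component that never dies has $e=-\infty$. Bottleneck distance: for multisets $A_1,A_2\subset\overline{\mathbb{R}}^2$, $d_B^\infty(A_1,A_2)=\inf_{\gamma}\sup_{p\in A_1}\|p-\gamma(p)\|_\infty$, the infimum over multiset bijections $\gamma\colon A_1\to A_2$ (with the convention $|(-\infty)-(-\infty)|=0$). Appearance level: for $\mathbf{x}_i,\mathbf{x}_j\in\mathcal{S}_\mathbf{x}$ in the same connected component of $R_\delta(\mathcal{S}_\mathbf{x})$, $\alpha_\delta(\mathbf{x}_i,\mathbf{x}_j)=\max_{\gamma\in\mathcal{P}(\mathbf{x}_i,\mathbf{x}_j)}\min_{\mathbf{x}\in\gamma}\mathbb{P}(\mathbf{x})$, where $\mathcal{P}(\mathbf{x}_i,\mathbf{x}_j)$ is the set of paths (sequences of vertices with consecutive vertices adjacent) in $R_\delta(\mathcal{S}_\mathbf{x})$ from $\mathbf{x}_i$ to $\mathbf{x}_j$; equivalently, the largest $\alpha$ such that $\mathbf{x}_i,\mathbf{x}_j$ lie in the same connected component of $R_{\delta,\alpha}$. $\alpha_{\sigma(\cdot)}$ is defined identically using paths in $R_{\sigma(\cdot)}(\mathcal{S}_\mathbf{x})$.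 *)

From HB Require Import structures.
From mathcomp Require Import all_boot all_order all_algebra.
From mathcomp Require Import boolp classical_sets reals constructive_ereal ereal.
Set Implicit Arguments. Unset Strict Implicit. Unset Printing Implicit Defensive.
Import Order.TTheory GRing.Theory Num.Theory.
Local Open Scope ring_scope.
Local Open Scope classical_set_scope.

Section Defs.
Variable R : realType.

Definition rips_rel (X : Type) (n : nat) (d : X -> X -> R) (x : 'I_n -> X)
  (delta : R) : rel 'I_n :=
  fun i j => (i != j) && (d (x i) (x j) <= delta).

Definition srips_rel (X : Type) (n : nat) (d : X -> X -> R) (x : 'I_n -> X)
  (sigma : X -> X -> R) : rel 'I_n :=
  fun i j => (i != j) &&
    ((d (x i) (x j) <= sigma (x i) (x j)) || (d (x i) (x j) <= sigma (x j) (x i))).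

Definition pathmin (n : nat) (f : 'I_n -> R) (i : 'I_n) (s : seq 'I_n) : R :=
  \big[Num.min/f i]_(v <- s) f v.

(* appearance level alpha(x_i,x_j): max over paths from i to j of the minimum
   of P along the path; 0 by convention if i, j are not connected *)
Definition appearance (n : nat) (e : rel 'I_n) (f : 'I_n -> R) (i j : 'I_n) : R :=
  if connect e i j then
    sup [set pathmin f i s | s in [set s | path e i s /\ last i s = j]]
  else 0.

(* u is elder than v: born strictly earlier (higher f), ties broken by index *)
Definition elder (n : nat) (f : 'I_n -> R) (u v : 'I_n) : bool :=
  (f v < f u) || ((f u == f v) && (u < v)%N).

(* death level of the class born at vertex v (elder rule): the largest level
   alpha at which v is connected, in the induced subgraph on {f >= alpha},
   to an elder vertex; -oo if never. *)
Definition death (n : nat) (e : rel 'I_n) (f : 'I_n -> R) (v : 'I_n) : \bar R :=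
  ereal_sup [set (pathmin f v s)%:E |
              s in [set s | path e v s /\ elder f (last v s) v]].

(* index set of the diagram multiset: one point per vertex plus the diagonal
   with (countably) infinite multiplicity *)
Definition pd_index (n : nat) : Type := ('I_n + (\bar R * nat))%type.

(* Vertex v gives the point (f v, death v); if v is not the birth of a class
   then death v = f v and this point lies on the diagonal. *)
Definition pdiagram (n : nat) (e : rel 'I_n) (f : 'I_n -> R)
  (k : pd_index n) : \bar R * \bar R :=
  match k with
  | inl v => ((f v)%:E, death e f v)
  | inr (a, _) => (a, a)
  end.

(* |a - b| on extended reals with |(+-oo) - (+-oo)| = 0 *)
Definition edist (a b : \bar R) : \bar R :=
  if a == b then 0%E else `|(a - b)%E|%E.

Definition linf (p q : \bar R * \bar R) : \bar R :=
  Order.max (edist p.1 q.1) (edist p.2 q.2).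

Definition bottleneck (I : Type) (A1 A2 : I -> \bar R * \bar R) : \bar R :=
  ereal_inf [set ereal_sup (range (fun i => linf (A1 i) (A2 (g i)))) |
              g in [set g : I -> I | bijective g]].

End Defs.

From HB Require Import structures.
From mathcomp Require Import all_boot all_order all_algebra.
From mathcomp Require Import boolp classical_sets reals constructive_ereal ereal.
Import Order.TTheory GRing.Theory Num.Theory.
Local Open Scope ring_scope.

(* Match every point of one diagram with the same point of the other: vertex v
   with vertex v, diagonal points with themselves.  Births are the same value
   P(x_v).  The death of v is the supremum, over the vertices w elder than v
   and connected to v, of the appearance levels alpha(v, w): every path from v
   to such a w has its minimum below alpha(v, w), and alpha(v, w) is itself a
   supremum of such minima.  As both graphs have the same components, the same
   vertices w are available in both, so the deaths differ by at most
   max |alpha_delta - alpha_sigma|.  Nothing about d, P or sigma is used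
   beyond the equality of the components. *)

Set Implicit Arguments. Unset Strict Implicit.

Local Open Scope classical_set_scope.

Section AppearanceDeath.
Variables (R : realType) (n : nat) (f : 'I_n -> R).

Lemma pathmin_le_head v s : pathmin f v s <= f v.
Proof.
rewrite /pathmin; elim: s => [|a s IHs]; rewrite ?big_nil ?big_cons //.
by rewrite ge_min IHs orbT.
Qed.

Lemma connect_last_path (e : rel 'I_n) v s : path e v s -> connect e v (last v s).
Proof. by move=> pvs; apply/connectP; exists s. Qed.

Lemma pathmin_le_appearance (e : rel 'I_n) v s :
  path e v s -> pathmin f v s <= appearance e f v (last v s).
Proof.
move=> pvs; rewrite /appearance connect_last_path //.
apply: ub_le_sup; last by exists s.
by exists (f v) => _ [s' _ <-]; exact: pathmin_le_head.
Qed.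

Lemma pathmin_le_death (e : rel 'I_n) v s :
  path e v s -> elder f (last v s) v -> ((pathmin f v s)%:E <= death e f v)%E.
Proof. by move=> pvs elder_vs; apply: ereal_sup_ubound; exists s. Qed.

Lemma death_le_birth (e : rel 'I_n) v : (death e f v <= (f v)%:E)%E.
Proof. by apply: ge_ereal_sup => _ [s _ <-]; rewrite lee_fin pathmin_le_head. Qed.

Lemma death_neq_pinfty (e : rel 'I_n) v : death e f v != +oo%E.
Proof.
by apply/eqP => death_eq; have := death_le_birth e v; rewrite death_eq.
Qed.

Lemma appearance_le_death (e : rel 'I_n) v s :
  path e v s -> elder f (last v s) v ->
  ((appearance e f v (last v s))%:E <= death e f v)%E.
Proof.
move=> pvs elder_vs; have death_ge := pathmin_le_death pvs elder_vs.
rewrite /appearance connect_last_path //.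
case death_eq: (death e f v) death_ge => [r| |] death_ge;
  last by rewrite leeNy_eq in death_ge.
- rewrite lee_fin; apply: ge_sup; first by exists (pathmin f v s), s.
  move=> _ [s' [pvs' last_s'] <-]; rewrite -lee_fin -death_eq.
  by apply: pathmin_le_death; rewrite // last_s'.
- exact: leey.
Qed.

Lemma death_le_shift (e1 e2 : rel 'I_n) (M : R) :
  (forall i j, connect e1 i j = connect e2 i j) ->
  (forall i j, appearance e1 f i j <= appearance e2 f i j + M) ->
  forall v, (death e1 f v <= death e2 f v + M%:E)%E.
Proof.
move=> same_cc app_le v; apply: ge_ereal_sup => _ [s [pvs elder_vs] <-].
have /connectP[s2 pvs2 last_s2] : connect e2 v (last v s).
  by rewrite -same_cc connect_last_path.
apply: (@le_trans _ _ ((appearance e2 f v (last v s) + M)%:E)).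
  by rewrite lee_fin (le_trans (pathmin_le_appearance pvs)).
by rewrite EFinD leeD2r // last_s2 appearance_le_death // -last_s2.
Qed.

End AppearanceDeath.

Section Bottleneck.
Variable R : realType.

Lemma edist_xx (a : \bar R) : edist a a = 0%E.
Proof. by rewrite /edist eqxx. Qed.

Lemma edist_le (a b : \bar R) (M : R) : 0 <= M ->
  a != +oo%E -> b != +oo%E ->
  (a <= b + M%:E)%E -> (b <= a + M%:E)%E -> (edist a b <= M%:E)%E.
Proof.
rewrite /edist => M_ge0.
case: a => [r| |]; case: b => [s| |] //= _ _; rewrite ?eqxx ?lee_fin //.
move=> rs sr; case: ifP => _; rewrite ?lee_fin //.
by rewrite ler_distl rs lerBlDr sr.
Qed.

Lemma bottleneck_le_pointwise (I : Type) (A1 A2 : I -> \bar R * \bar R)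
    (M : \bar R) :
  (forall i, (linf (A1 i) (A2 i) <= M)%E) -> (bottleneck A1 A2 <= M)%E.
Proof.
move=> linf_le; apply: le_trans (ereal_inf_lbound _) _.
  by exists id; first exact: (@Bijective _ _ id id).
by apply: ge_ereal_sup => _ [i _ <-].
Qed.

Lemma pdiagram_linf_le n (e1 e2 : rel 'I_n) (f : 'I_n -> R) (M : R) :
  0 <= M -> (forall i j, connect e1 i j = connect e2 i j) ->
  (forall i j, `|appearance e1 f i j - appearance e2 f i j| <= M) ->
  forall k, (linf (pdiagram e1 f k) (pdiagram e2 f k) <= M%:E)%E.
Proof.
move=> M_ge0 same_cc app_dist [v|[a ?]]; rewrite /linf /= edist_xx.
- rewrite ge_max lee_fin M_ge0 /=.
  apply: edist_le; rewrite ?death_neq_pinfty //; apply: death_le_shift => // i j.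
  + by have := app_dist i j; rewrite ler_distl => /andP[].
  + by have := app_dist i j; rewrite ler_distl lerBlDr => /andP[].
- by rewrite maxxx lee_fin.
Qed.

End Bottleneck.

Theorem theorem1 (R : realType) (X : Type) (d : X -> X -> R)
  (d_ge0 : forall a b, 0 <= d a b)
  (d_eq0 : forall a b, d a b = 0 <-> a = b)
  (d_sym : forall a b, d a b = d b a)
  (d_tri : forall a b c, d a c <= d a b + d b c)
  (P : X -> R) (P_ge0 : forall a, 0 <= P a)
  (n : nat) (x : 'I_n -> X) (x_inj : injective x)
  (delta : R) (delta_ge0 : 0 <= delta)
  (sigma : X -> X -> R) (sigma_gt0 : forall a b, 0 < sigma a b)
  (same_cc : forall i j : 'I_n,
     connect (rips_rel d x delta) i j = connect (srips_rel d x sigma) i j) :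
  (bottleneck (pdiagram (rips_rel d x delta) (P \o x))
              (pdiagram (srips_rel d x sigma) (P \o x))
   <= (\big[Num.max/0]_(ij : 'I_n * 'I_n)
         `|appearance (rips_rel d x delta) (P \o x) ij.1 ij.2
           - appearance (srips_rel d x sigma) (P \o x) ij.1 ij.2|)%:E)%E.
Proof.
set M := \big[Num.max/0]_(ij : 'I_n * 'I_n) _.
have M_ge0 : 0 <= M by rewrite /M; elim/big_ind: _ => // a b; rewrite le_max => ->.
apply/bottleneck_le_pointwise/pdiagram_linf_le => // i j.
exact: (le_bigmax 0 (fun ij : 'I_n * 'I_n => _) (i, j)).
Qed.
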